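(* Let $\mathcal A$ be a weakly amenable Banach algebra and let $I$ be a closed two-sided ideal of $\mathcal A$ with a bounded approximate identity. If either (i) $I$ is Arens regular, or (ii) $\mathcal A$ is Arens regular, then $\mathcal A$ is $I$-weakly amenable, i.e. $H^1(\mathcal A,I^* )=\{0\}$.
   Context: $I^*$ is a Banach $\mathcal A$-bimodule with $\langle x,a\cdot f\rangle=\langle xa,f\rangle$, $\langle x,f\cdot a\rangle=\langle ax,f\rangle$. A derivation $D:\mathcal A\to Z$ is a continuous linear map with $D(ab)=a\cdot D(b)+D(a)\cdot b$; it is inner if $D(a)=a\cdot z-z\cdot a$ for some $z\in Z$; $H^1(\mathcal A,Z)=\{0\}$ means every derivation is inner. $\mathcal A$ is weakly amenable if $H^1(\mathcal A,\mathcal A^* )=\{0\}$. *)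

From HB Require Import structures.
From mathcomp Require Import all_boot all_algebra.
From mathcomp Require Import complex.
From mathcomp Require Import all_classical all_reals all_analysis.
Import numFieldNormedType.Exports.
Import GRing.Theory Num.Theory.

Set Implicit Arguments.
Unset Strict Implicit.
Unset Printing Implicit Defensive.

Local Open Scope ring_scope.
Local Open Scope classical_set_scope.

Section BanachAlgebras.
Variables (R : realType) (V : completeNormedModType (R[i])).
Local Notation C := (R[i]).

Definition banach_algebra (mul : V -> V -> V) : Prop :=
  [/\ (forall a b c : V, mul a (mul b c) = mul (mul a b) c),
      (forall a b c : V, mul (a + b) c = mul a c + mul b c),
      (forall a b c : V, mul a (b + c) = mul a b + mul a c),
      (forall (k : C) (a b : V), mul (k *: a) b = k *: mul a b)
    & ((forall (k : C) (a b : V), mul a (k *: b) = k *: mul a b)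
       /\ (forall a b : V, `|mul a b| <= `|a| * `|b|))].

Definition closed_ideal (mul : V -> V -> V) (I : set V) : Prop :=
  [/\ closed I, I 0,
      (forall x y, I x -> I y -> I (x + y)),
      (forall (k : C) x, I x -> I (k *: x))
    & ((forall a x, I x -> I (mul a x))
       /\ (forall a x, I x -> I (mul x a)))].

(* Elements of the dual dual(S) of a (linear) subspace S of V, represented by
   functions V -> C whose values outside S are irrelevant:
   linear and bounded on S. *)
Definition dual_elt (S : set V) (f : V -> C) : Prop :=
  [/\ (forall x y, S x -> S y -> f (x + y) = f x + f y),
      (forall (k : C) x, S x -> f (k *: x) = k * f x)
    & (exists M : C, forall x, S x -> `|f x| <= M * `|x|)].

(* Elements of the bidual bidual(S) : functionals on dual(S) (well defined on dual(S),
   i.e. depending only on the restriction to S), linear and bounded for the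
   dual norm (bounded on the unit ball of dual(S)). *)
Definition bidual_elt (S : set V) (F : (V -> C) -> C) : Prop :=
  [/\ (forall f g, dual_elt S f -> dual_elt S g ->
          (forall x, S x -> f x = g x) -> F f = F g),
      (forall f g, dual_elt S f -> dual_elt S g ->
          F (fun x => f x + g x) = F f + F g),
      (forall (k : C) f, dual_elt S f -> F (fun x => k * f x) = k * F f)
    & (exists M : C, forall f, dual_elt S f ->
          (forall x, S x -> `|f x| <= `|x|) -> `|F f| <= M)].

(* First and second Arens products on bidual(S) (S a subalgebra), with
   <f.a, b> = f(ab), <F.f, a> = F(f.a), <F [] G, f> = <F, G.f>
   <a.f, b> = f(ba), <f.F, a> = F(a.f), <F <> G, f> = <G, f.F>. *)
Definition arens_first (mul : V -> V -> V) (F G : (V -> C) -> C)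
  : (V -> C) -> C :=
  fun f => F (fun a => G (fun b => f (mul a b))).

Definition arens_second (mul : V -> V -> V) (F G : (V -> C) -> C)
  : (V -> C) -> C :=
  fun f => G (fun a => F (fun b => f (mul b a))).

Definition arens_regular (mul : V -> V -> V) (S : set V) : Prop :=
  forall F G, bidual_elt S F -> bidual_elt S G ->
    forall f, dual_elt S f -> arens_first mul F G f = arens_second mul F G f.

(* A derivation D : A -> dual(I), where dual(I) is the dual A-bimodule
   <x, a.f> = <xa, f>, <x, f.a> = <ax, f>  (x in I).
   D is linear and continuous (bounded: ||D a|| <= M ||a||). *)
Definition dual_derivation (mul : V -> V -> V) (I : set V)
    (D : V -> V -> C) : Prop :=
  [/\ (forall a, dual_elt I (D a)),
      (forall a b x, I x -> D (a + b) x = D a x + D b x),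
      (forall (k : C) a x, I x -> D (k *: a) x = k * D a x),
      (exists M : C, forall a x, I x -> `|D a x| <= M * `|a| * `|x|)
    & (forall a b x, I x -> D (mul a b) x = D b (mul x a) + D a (mul b x))].

(* D is inner: D a = a.z - z.a for some z in dual(I). *)
Definition inner_dual_derivation (mul : V -> V -> V) (I : set V)
    (D : V -> V -> C) : Prop :=
  exists z, dual_elt I z /\
    forall a x, I x -> D a x = z (mul x a) - z (mul a x).

Definition H1_dual_trivial (mul : V -> V -> V) (I : set V) : Prop :=
  forall D, dual_derivation mul I D -> inner_dual_derivation mul I D.

Definition weakly_amenable (mul : V -> V -> V) : Prop :=
  H1_dual_trivial mul setT.

Definition I_weakly_amenable (mul : V -> V -> V) (I : set V) : Prop :=
  H1_dual_trivial mul I.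

Definition directed (T : Type) (le : T -> T -> Prop) : Prop :=
  [/\ (exists t : T, True),
      (forall t, le t t),
      (forall s t u, le s t -> le t u -> le s u)
    & (forall s t, exists u, le s u /\ le t u)].

Definition has_bai (mul : V -> V -> V) (I : set V) : Prop :=
  exists (T : Type) (le : T -> T -> Prop) (e : T -> V),
    [/\ directed le,
        (forall t, I (e t)),
        (exists M : C, forall t, `|e t| <= M)
      & (forall x, I x -> forall eps : C, 0 < eps ->
           exists t0, forall t, le t0 t ->
             `|mul (e t) x - x| < eps /\ `|mul x (e t) - x| < eps)].

End BanachAlgebras.

From HB Require Import structures.
From mathcomp Require Import all_boot all_algebra.
From mathcomp Require Import complex.
From mathcomp Require Import all_classical all_reals all_analysis.
From mathcomp Require Import ring.
Import numFieldNormedType.Exports.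
Import GRing.Theory Num.Theory order.Order.TTheory.

Set Implicit Arguments.
Unset Strict Implicit.
Unset Printing Implicit Defensive.

Local Open Scope ring_scope.
Local Open Scope classical_set_scope.
Local Open Scope complex_scope.

(* Follow the bounded approximate identity (e_t) of I along an ultrafilter
   finer than its tails; bounded complex nets converge along it (compactness of
   [-B, B]), so every f in I^* extends to A^* by f~(u) = lim_t f(e_t u), and
   f~ = f on I.  For a derivation D : A -> I^*, the map a |-> (D a)~ is a
   derivation into A^* once lim_s f(e_s y) = lim_t f(y e_t) for f in I^*.  The
   two sides are the first and second Arens products of the weak-* limits of
   (e_s y) and (e_t), evaluated at f (in the bidual of I) or at f~ (in the
   bidual of A), so either Arens regularity hypothesis gives the identity.
   Weak amenability makes a |-> (D a)~ inner, and restricting the implementing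
   functional to I shows that D is inner. *)

Lemma ler_normr_absM (K : numDomainType) (u M w : K) :
  0 <= w -> `|u| <= M * w -> `|u| <= `|M| * w.
Proof.
move=> w0 uM; have Mw0 : 0 <= M * w := le_trans (normr_ge0 _) uM.
by rewrite -(ger0_norm w0) -normrM (ger0_norm Mw0).
Qed.

Section PointwiseLimits.
Variables (K : numFieldType) (T : Type) (F : set_system T).
Context {FF : ProperFilter F}.

(* limD for sums written pointwise, the shape in which they arise below. *)
Lemma limD_pointwise (g h : T -> K) : cvg (g @ F) -> cvg (h @ F) ->
  lim (g t + h t @[t --> F]) = lim (g @ F) + lim (h @ F).
Proof. exact: limD. Qed.

Lemma limMl (k : K) (g : T -> K) :
  cvg (g @ F) -> lim (k * g t @[t --> F]) = k * lim (g @ F).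
Proof.
by move=> gF; apply: cvg_lim; [exact: norm_hausdorff|exact: cvgMl_tmp].
Qed.

End PointwiseLimits.

Section UltraLimits.
Variables (R : realType) (T : Type) (U : set_system T).
Context {UU : UltraFilter U}.
(* The cast selects the numFieldType structure, whose topology lim and -->
   use. *)
Local Notation C := (R[i] : numFieldType).

Lemma ultra_cvg_boundedR (h : T -> R) (B : R) :
  (forall t, `|h t| <= B) -> cvg (h @ U).
Proof.
move=> hB.
have hU : U (h @^-1` `[- B, B]).
  by apply: filterE => t; rewrite /= in_itv /= -ler_norml.
have [p [_ clp]] := @segment_compact _ (- B) B (h @ U) _ hU.
apply/cvg_ex; exists p => W Wp.
have [//|UnW] := in_ultra_setVsetC (h @^-1` W) UU.
by have [x [/= nWx Wx]] := clp (~` W) W UnW Wp.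
Qed.

Lemma ler_norm_ReIm (z : R[i]) :
  (`|complex.Re z| <= complex.Re `|z|) /\ (`|complex.Im z| <= complex.Re `|z|).
Proof.
rewrite normc_def /= -!sqrtr_sqr.
by split; apply: ler_wsqrtr; rewrite ?lerDl ?lerDr sqr_ge0.
Qed.

Lemma ler_normc_ReIm (z : R[i]) :
  `|z| <= (`|complex.Re z| + `|complex.Im z|)%:C.
Proof.
rewrite normc_def lecR.
have h0 : 0 <= `|complex.Re z| + `|complex.Im z| by rewrite addr_ge0.
rewrite -(ger0_norm h0) -sqrtr_sqr; apply: ler_wsqrtr.
rewrite sqrrD -(real_normK (num_real (complex.Re z))).
rewrite -(real_normK (num_real (complex.Im z))).
by rewrite -addrA lerD2l lerDr mulrn_wge0 // mulr_ge0.
Qed.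

Lemma ultra_cvg_bounded (g : T -> C) (B : C) :
  (forall t, `|g t| <= B) -> cvg (g @ U).
Proof.
move=> gB.
have ReImB t : `|complex.Re (g t)| <= complex.Re B /\
               `|complex.Im (g t)| <= complex.Re B.
  have := gB t; rewrite lecE => /andP[_ leB].
  by have [] := ler_norm_ReIm (g t); split; apply: le_trans leB.
have /cvg_ex[a ga] := @ultra_cvg_boundedR (fun t => complex.Re (g t)) _
  (fun t => (ReImB t).1).
have /cvg_ex[b gb] := @ultra_cvg_boundedR (fun t => complex.Im (g t)) _
  (fun t => (ReImB t).2).
apply/cvg_ex; exists (a +i* b); apply/cvgrPdist_lt => -[e e'].
rewrite ltcE /= => /andP[/eqP -> e0].
have e20 : 0 < e / 2 by rewrite divr_gt0.
move: ga gb => /cvgrPdist_lt/(_ _ e20) ga /cvgrPdist_lt/(_ _ e20) gb.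
apply: filterS2 ga gb => t /= ga gb.
apply: le_lt_trans (ler_normc_ReIm _) _.
rewrite complexr0 ltcR [e]splitr.
by case: (g t) ga gb => x y /= ga gb; rewrite ltrD.
Qed.

Lemma ler_norm_lim (g : T -> C) (B : C) :
  (forall t, `|g t| <= B) -> `|lim (g @ U)| <= B.
Proof.
move=> gB; have /cvgrPdist_lt gl := ultra_cvg_bounded gB.
apply/ler_addgt0Pr => eps /gl/filter_ex[t /= lgt].
rewrite -(subrK (g t) (lim _)) addrC.
by apply: le_trans (ler_normD _ _) _; rewrite lerD // ltW.
Qed.

End UltraLimits.

Section BanachAlgebra.
Variables (R : realType) (V : completeNormedModType R[i]) (mul : V -> V -> V).
Local Notation C := (R[i] : numFieldType).
Hypothesis mulV : banach_algebra mul.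

Lemma bmulA a b c : mul a (mul b c) = mul (mul a b) c.
Proof. by case: mulV. Qed.

Lemma bmulDr a b c : mul a (b + c) = mul a b + mul a c.
Proof. by case: mulV. Qed.

Lemma bmulZr (k : C) a b : mul a (k *: b) = k *: mul a b.
Proof. by case: mulV => _ _ _ _ []. Qed.

Lemma ler_norm_bmul a b : `|mul a b| <= `|a| * `|b|.
Proof. by case: mulV => _ _ _ _ []. Qed.

Lemma dual_elt_bound (S : set V) f : dual_elt S f ->
  exists2 M : C, 0 <= M & forall x, S x -> `|f x| <= M * `|x|.
Proof.
by case=> _ _ [M fM]; exists `|M| => // x Sx; apply/ler_normr_absM/fM.
Qed.

Lemma dual_eltB (S : set V) f x y : dual_elt S f -> S (x - y) -> S y ->
  f (x - y) = f x - f y.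
Proof.
by case=> fD _ _ Sxy Sy; rewrite -{2}(subrK y x) (fD _ _ Sxy Sy) addrK.
Qed.

Lemma dual_elt_sub (S S' : set V) f :
  S' `<=` S -> dual_elt S f -> dual_elt S' f.
Proof.
move=> S'S [fD fZ [M fM]]; split=> [x y /S'S Sx /S'S Sy|k x /S'S Sx|].
- exact: fD.
- exact: fZ.
- by exists M => x /S'S; apply: fM.
Qed.

Variable I : set V.
Hypothesis idealI : closed_ideal mul I.

Lemma idealB x y : I x -> I y -> I (x - y).
Proof.
by case: idealI => _ _ ID IZ _ Ix Iy; rewrite -scaleN1r; apply/ID/IZ.
Qed.

Lemma idealMl a x : I x -> I (mul a x).
Proof. by case: idealI => _ _ _ _ [+ _]; apply. Qed.

Lemma idealMr a x : I x -> I (mul x a).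
Proof. by case: idealI => _ _ _ _ [_]; apply. Qed.

Lemma dual_elt_mull f b : dual_elt I f -> dual_elt I (fun x => f (mul b x)).
Proof.
move=> If; have [fD fZ _] := If; have [M M0 fM] := dual_elt_bound If.
split=> [x y Ix Iy|k x Ix|].
- by rewrite bmulDr fD //; apply: idealMl.
- by rewrite bmulZr fZ //; apply: idealMl.
- exists (M * `|b|) => x Ix; apply: le_trans (fM _ (idealMl b Ix)) _.
  by rewrite -mulrA ler_wpM2l // ler_norm_bmul.
Qed.

Section UltraNets.
Variables (T : Type) (U : set_system T).
Context {UU : UltraFilter U}.

Lemma cvg_dual_net (S : set V) (f : V -> C) (w : T -> V) (B : C) :
  dual_elt S f -> (forall t, S (w t)) -> (forall t, `|w t| <= B) ->
  cvg (f (w t) @[t --> U]).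
Proof.
move=> /dual_elt_bound[M M0 fM] Sw wB.
apply: (@ultra_cvg_bounded _ _ _ _ _ (M * B)) => t.
by apply: le_trans (fM _ (Sw t)) _; rewrite ler_wpM2l.
Qed.

(* The weak-* limit along U of a bounded net w, as an element of the bidual. *)
Definition weak_lim (w : T -> V) (f : V -> C) : C := lim (f (w t) @[t --> U]).

Lemma bidual_weak_lim (S : set V) (w : T -> V) (B : C) :
  (forall t, S (w t)) -> (forall t, `|w t| <= B) -> bidual_elt S (weak_lim w).
Proof.
move=> Sw wB; split=> [f g _ _ fg|f g Sf Sg|k f Sf|].
- rewrite /weak_lim (_ : (fun t => f (w t)) = fun t => g (w t)) //.
  by apply: funext => t; apply: fg.
- by rewrite /weak_lim; apply: limD_pointwise; apply: cvg_dual_net Sw wB.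
- by rewrite /weak_lim; apply: limMl; apply: cvg_dual_net Sw wB.
- exists B => f _ f1; apply: ler_norm_lim => t.
  exact: le_trans (f1 _ (Sw t)) (wB t).
Qed.

Section ApproximateIdentity.
Variables (e : T -> V) (Me : C).
Hypothesis bai_in : forall t, I (e t).
Hypothesis bai_bound : forall t, `|e t| <= Me.
Hypothesis bai_left : forall x, I x -> mul (e t) x @[t --> U] --> x.
Hypothesis bai_right : forall x, I x -> mul x (e t) @[t --> U] --> x.

Lemma ler_norm_baiM u t : `|mul (e t) u| <= Me * `|u|.
Proof. by apply: le_trans (ler_norm_bmul _ _) _; rewrite ler_wpM2r. Qed.

Lemma cvg_dual_elt (f : V -> C) (w : T -> V) x : dual_elt I f -> I x ->
  (forall t, I (w t)) -> w @ U --> x -> f (w t) @[t --> U] --> f x.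
Proof.
move=> If Ix Iw /cvgrPdist_le wx; have [M M0 fM] := dual_elt_bound If.
apply/cvgrPdist_le => eps eps0.
have M1 : 0 < M + 1 by rewrite ltr_wpDl.
near=> t.
rewrite -(dual_eltB If (idealB Ix (Iw t)) (Iw t)).
apply: le_trans (fM _ (idealB Ix (Iw t))) _.
apply: le_trans (ler_wpM2l M0 _) _.
  exact: (near (wx _ (divr_gt0 eps0 M1)) t).
by rewrite mulrCA ler_piMr ?ltW // ltr_pdivrMr // mul1r ltrDl.
Unshelve. all: by end_near.
Qed.

Definition bai_ext (f : V -> C) (u : V) : C :=
  weak_lim (fun t => mul (e t) u) f.

Lemma bai_extE f x : dual_elt I f -> I x -> bai_ext f x = f x.
Proof.
move=> If Ix; apply: cvg_lim; first exact: norm_hausdorff.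
by apply: cvg_dual_elt (bai_left Ix) => // t; apply: idealMr.
Qed.

Lemma lim_bai_right (f : V -> C) x : dual_elt I f -> I x ->
  lim (f (mul x (e t)) @[t --> U]) = f x.
Proof.
move=> If Ix; apply: cvg_lim; first exact: norm_hausdorff.
by apply: cvg_dual_elt (bai_right Ix) => // t; apply: idealMl.
Qed.

Lemma bai_ext_dual_elt f : dual_elt I f -> dual_elt setT (bai_ext f).
Proof.
move=> If; have [fD fZ _] := If; have [M M0 fM] := dual_elt_bound If.
have Ie u t : I (mul (e t) u) by apply: idealMr.
have cvg_f u := cvg_dual_net If (Ie u) (ler_norm_baiM u).
split=> [u v _ _|k u _|].
- rewrite /bai_ext /weak_lim (_ : (fun t => _) =
    fun t => f (mul (e t) u) + f (mul (e t) v)).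
    by apply: limD_pointwise; apply: cvg_f.
  by apply: funext => t; rewrite bmulDr fD.
- rewrite /bai_ext /weak_lim (_ : (fun t => _) =
    fun t => k * f (mul (e t) u)); first by apply: limMl; apply: cvg_f.
  by apply: funext => t; rewrite bmulZr fZ.
- exists (M * Me) => u _; rewrite -mulrA; apply: ler_norm_lim => t.
  by apply: le_trans (fM _ (Ie u t)) _; rewrite ler_wpM2l // ler_norm_baiM.
Qed.

Lemma arens_first_bai (f g : V -> C) y : dual_elt I f -> {in I, g =1 f} ->
  arens_first mul (weak_lim (fun s => mul (e s) y)) (weak_lim e) g =
  bai_ext f y.
Proof.
move=> If gf; rewrite /arens_first /bai_ext /weak_lim.
suff -> : (fun s => lim (g (mul (mul (e s) y) (e t)) @[t --> U])) =
          (fun s => f (mul (e s) y)) by [].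
apply: funext => s; have Iey : I (mul (e s) y) by apply: idealMr.
rewrite -(lim_bai_right If Iey).
suff -> : (fun t => g (mul (mul (e s) y) (e t))) =
          (fun t => f (mul (mul (e s) y) (e t))) by [].
by apply: funext => t; apply: gf; rewrite inE; apply: idealMr.
Qed.

Lemma arens_second_bai (f g : V -> C) y : dual_elt I f -> {in I, g =1 f} ->
  arens_second mul (weak_lim (fun s => mul (e s) y)) (weak_lim e) g =
  lim (f (mul y (e t)) @[t --> U]).
Proof.
move=> If gf; rewrite /arens_second /weak_lim.
suff -> : (fun t => lim (g (mul (mul (e s) y) (e t)) @[s --> U])) =
          (fun t => f (mul y (e t))) by [].
apply: funext => t; have Iye : I (mul y (e t)) by apply: idealMl.
rewrite -(bai_extE If Iye) /bai_ext /weak_lim.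
suff -> : (fun s => g (mul (mul (e s) y) (e t))) =
          (fun s => f (mul (e s) (mul y (e t)))) by [].
apply: funext => s; rewrite bmulA; apply: gf.
by rewrite inE; apply/idealMr/idealMr.
Qed.

Lemma arens_regular_bai_swap (S : set V) (f g : V -> C) y :
  arens_regular mul S -> I `<=` S -> dual_elt S g -> dual_elt I f ->
  {in I, g =1 f} -> bai_ext f y = lim (f (mul y (e t)) @[t --> U]).
Proof.
move=> regS IS Sg If gf.
rewrite -(arens_first_bai y If gf) -(arens_second_bai y If gf).
apply: regS Sg.
- apply: (bidual_weak_lim (B := Me * `|y|)) => t; last exact: ler_norm_baiM.
  exact/IS/idealMr.
- by apply: (bidual_weak_lim (B := Me)) => // t; apply/IS.
Qed.

Hypothesis regular : arens_regular mul I \/ arens_regular mul setT.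

Lemma bai_ext_swap (f : V -> C) y : dual_elt I f ->
  bai_ext f y = lim (f (mul y (e t)) @[t --> U]).
Proof.
move=> If; case: regular => [regI | regA].
- exact: (arens_regular_bai_swap y regI (@subset_refl _ I) If If
    (fun _ _ => erefl)).
- apply: (arens_regular_bai_swap y regA (@subsetT _ I) (bai_ext_dual_elt If)
    If).
  by move=> x; rewrite inE => /(bai_extE If).
Qed.

Lemma bai_ext_mull (f : V -> C) b u : dual_elt I f ->
  bai_ext (fun x => f (mul b x)) u = bai_ext f (mul b u).
Proof.
move=> If; rewrite (bai_ext_swap _ (dual_elt_mull b If)) (bai_ext_swap _ If).
suff -> : (fun t => f (mul b (mul u (e t)))) =
          (fun t => f (mul (mul b u) (e t))) by [].
by apply: funext => t; rewrite bmulA.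
Qed.

Lemma bai_ext_derivation (D : V -> V -> C) : dual_derivation mul I D ->
  dual_derivation mul setT (fun a => bai_ext (D a)).
Proof.
case=> ID DD DZ [MD DM] Dmul.
have Ie u t : I (mul (e t) u) by apply: idealMr.
have cvg_net a u := cvg_dual_net (ID a) (Ie u) (ler_norm_baiM u).
split=> [a|a b u _|k a u _||a b u _].
- exact: bai_ext_dual_elt.
- rewrite /bai_ext /weak_lim (_ : (fun t => _) =
    fun t => D a (mul (e t) u) + D b (mul (e t) u)).
    by apply: limD_pointwise; apply: cvg_net.
  by apply: funext => t; rewrite DD.
- rewrite /bai_ext /weak_lim (_ : (fun t => _) =
    fun t => k * D a (mul (e t) u)); first by apply: limMl; apply: cvg_net.
  by apply: funext => t; rewrite DZ.
- exists (`|MD| * Me) => a u _.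
  have -> : `|MD| * Me * `|a| * `|u| = `|MD| * (`|a| * (Me * `|u|)) by ring.
  apply: ler_norm_lim => t.
  have := DM a _ (Ie u t); rewrite -mulrA.
  move=> /(ler_normr_absM (mulr_ge0 (normr_ge0 _) (normr_ge0 _))) Dau.
  by apply: le_trans Dau _; rewrite ler_wpM2l // ler_wpM2l // ler_norm_baiM.
- rewrite -(bai_ext_mull b u (ID a)) /bai_ext /weak_lim.
  rewrite (_ : (fun t => _) = fun t =>
    D b (mul (e t) (mul u a)) + D a (mul b (mul (e t) u))).
    apply: limD_pointwise; first exact: cvg_net.
    exact: cvg_dual_net (dual_elt_mull b (ID a)) (Ie u) (ler_norm_baiM u).
  by apply: funext => t; rewrite Dmul // -bmulA.
Qed.

Lemma I_weakly_amenable_bai : weakly_amenable mul -> I_weakly_amenable mul I.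
Proof.
move=> amenA D dD; have [z [Az Dz]] := amenA _ (bai_ext_derivation dD).
exists z; split; first exact: dual_elt_sub Az.
move=> a x Ix; have [ID _ _ _ _] := dD.
by rewrite -(bai_extE (ID a) Ix) Dz.
Qed.

End ApproximateIdentity.

End UltraNets.

End BanachAlgebra.

Lemma directed_tails_proper (T : Type) (le : T -> T -> Prop) :
  directed le -> ProperFilter (filter_from setT (fun i => [set t | le i t])).
Proof.
case=> -[t0 _] le_refl le_trans le_up.
have tailsF : Filter (filter_from setT (fun i => [set t | le i t])).
  apply: filter_from_filter; first by exists t0.
  move=> i j _ _; have [k [ik jk]] := le_up i j.
  exists k => // t /= kt.
  by split; [exact: le_trans ik kt|exact: le_trans jk kt].
by apply: filter_from_proper => i _; exists i; apply: le_refl.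
Qed.

Lemma has_bai_ultrafilter (R : realType) (V : completeNormedModType R[i])
    (mul : V -> V -> V) (I : set V) :
  has_bai mul I ->
  exists (T : Type) (U : set_system T) (e : T -> V) (Me : R[i]),
  [/\ UltraFilter U, (forall t, I (e t)), (forall t, `|e t| <= Me),
      (forall x, I x -> mul (e t) x @[t --> U] --> x)
    & (forall x, I x -> mul x (e t) @[t --> U] --> x)].
Proof.
case=> T [le [e [dir Ie [Me eMe] approx]]].
have [U [UU tailsU]] := ultraFilterLemma (directed_tails_proper dir).
have cvg_tails (w : T -> V) x : (forall eps : R[i], 0 < eps ->
    exists i, forall t, le i t -> `|w t - x| < eps) -> w @ U --> x.
  move=> wx; apply/cvgrPdist_lt => eps /wx[i wi]; apply: tailsU.
  by exists i => // t /wi; rewrite distrC.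
exists T, U, e, Me; split=> // x Ix; apply: cvg_tails => eps.
  by move=> /(approx x Ix)[i ei]; exists i => t /ei[].
by move=> /(approx x Ix)[i ei]; exists i => t /ei[].
Qed.

Unset Implicit Arguments.
Set Strict Implicit.

Theorem corollary3p4 (R : realType) (V : completeNormedModType (R[i]))
    (mul : V -> V -> V) (I : set V) :
  banach_algebra mul ->
  weakly_amenable mul ->
  closed_ideal mul I ->
  has_bai mul I ->
  (arens_regular mul I \/ arens_regular mul setT) ->
  I_weakly_amenable mul I.
Proof.
move=> mulV amenA idealI /has_bai_ultrafilter[T [U [e [Me [UU Ie eMe l r]]]]].
move=> regular.
exact: (I_weakly_amenable_bai mulV idealI Ie eMe l r regular).
Qed.
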